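(* Let $X$ be a real normed space, $\mathcal M=\{M_1,\dots,M_n\}\subset\mathcal P^f_{\mathrm{Cl,Conv}}(X)$, $\Sigma(\mathcal M)\neq\emptyset$ and $d=(d_1,\dots,d_n)\in\Omega(\mathcal M)$. Suppose there is an index $s$ such that every nonempty set of the form $B_r(M_s)\cap K_d$ ($0\le r<\infty$) lies in the same finiteness class as the $M_i$ (i.e. $d_H(B_r(M_s)\cap K_d,M_1)<\infty$). Then there exists $i$ with $d_i=\sup_{x\in M_i}|x\,K_d|$.
   Context: For a metric space $X$, $p\in X$, $A\subset X$: $|p\,A|=\inf_{a\in A}|p\,a|$ ($=\infty$ if $A=\emptyset$); for $0\le r<\infty$, $B_r(A)=\{p:|p\,A|\le r\}$. For nonempty $A,B$, $d_H(A,B)=\max\{\sup_{a\in A}|a\,B|,\sup_{b\in B}|b\,A|\}\in[0,\infty]$. $\mathcal P_{\mathrm{Cl}}(X)$ is the set of nonempty closed subsets of $X$ with $d_H$; a finiteness class is an equivalence class of $A\sim B\iff d_H(A,B)<\infty$. $\mathcal P^f_{\mathrm{Cl,Conv}}(X)$ denotes a fixed finiteness class of the space of nonempty closed convex subsets of $X$ (a family of nonempty closed convex sets pairwise at finite Hausdorff distance, maximal with this property); let $\mathcal P^f_{\mathrm{Cl}}(X)$ be the finiteness class of $\mathcal P_{\mathrm{Cl}}(X)$ containing it. For $\mathcal M=\{M_1,\dots,M_n\}$ in it, $S_{\mathcal M}(Y)=\sum_i d_H(Y,M_i)$; $\Sigma(\mathcal M)$ is the set of minimizers of $S_{\mathcal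 M}$ over $\mathcal P^f_{\mathrm{Cl}}(X)$; for $K\in\Sigma(\mathcal M)$, $d(K)=(d_H(K,M_1),\dots,d_H(K,M_n))$; $\Omega(\mathcal M)=\{d(K):K\in\Sigma(\mathcal M)\}$; for $d\in\Omega(\mathcal M)$, $\Sigma_d(\mathcal M)=\{K\in\Sigma(\mathcal M):d(K)=d\}$ and $K_d=\bigcap_{i=1}^nB_{d_i}(M_i)$. *)

From HB Require Import structures.
From mathcomp Require Import all_boot all_order all_algebra.
From mathcomp Require Import all_classical all_reals.
From mathcomp Require Import ereal topology normedtype.
Set Implicit Arguments. Unset Strict Implicit. Unset Printing Implicit Defensive.
Import Order.TTheory GRing.Theory Num.Theory.
Import numFieldNormedType.Exports.
Local Open Scope classical_set_scope.
Local Open Scope ring_scope.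

Section Defs.
Variables (R : realType) (X : normedModType R).

(* |p A| = inf_{a in A} |p a|, = +oo if A is empty *)
Definition pdist (p : X) (A : set X) : \bar R :=
  ereal_inf [set (`|p - a|)%:E | a in A].

Definition Bset (r : R) (A : set X) : set X :=
  [set p | (pdist p A <= r%:E)%E].

Definition dH (A B : set X) : \bar R :=
  maxe (ereal_sup [set pdist a B | a in A])
       (ereal_sup [set pdist b A | b in B]).

Definition convex (A : set X) : Prop :=
  forall x y (t : R), A x -> A y -> 0 <= t <= 1 -> A (t *: x + (1 - t) *: y).

(* the finiteness class of P_Cl(X) containing M0 *)
Definition PfCl (M0 : set X) (Y : set X) : Prop :=
  Y !=set0 /\ closed Y /\ (dH Y M0 < +oo)%E.

Variable n : nat.
Implicit Types (M : 'I_n.+1 -> set X).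

Definition SM M (Y : set X) : \bar R := (\sum_(i < n.+1) dH Y (M i))%E.

Definition Sigma M (K : set X) : Prop :=
  PfCl (M ord0) K /\ forall Y, PfCl (M ord0) Y -> (SM M K <= SM M Y)%E.

Definition Omega M (d : 'I_n.+1 -> R) : Prop :=
  exists K, Sigma M K /\ forall i, dH K (M i) = (d i)%:E.

Definition Kd M (d : 'I_n.+1 -> R) : set X :=
  [set p | forall i, Bset (d i) (M i) p].

End Defs.

From HB Require Import structures.
From mathcomp Require Import all_boot all_order all_algebra.
From mathcomp Require Import all_classical all_reals.
From mathcomp Require Import ereal topology normedtype.
From mathcomp Require Import lra ring.
Set Implicit Arguments. Unset Strict Implicit.
Import Order.TTheory GRing.Theory Num.Theory.
Import numFieldNormedType.Exports.
Local Open Scope classical_set_scope.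
Local Open Scope ring_scope.

(* Take a minimizer K with d(K) = d. Then K lies in K_d, so
   sup_{x in M_i} |x K_d| <= d_i for every i; suppose all these inequalities
   are strict, with a uniform gap eps.  By the hypothesis on s, every point z
   of K_d lies within a fixed distance D of K0 = B_{d_s - eps/2}(M_s) /\ K_d.
   Moving z a fraction t ~ eps / D of the way towards K0 stays in K_d by
   convexity, lands in B_{d_s - t eps/2}(M_s), and moves z by at most eps/2.
   Hence K' = B_{d_s - t eps/2}(M_s) /\ K_d is at Hausdorff distance at most
   d_i from each M_i and strictly less than d_s from M_s, contradicting the
   minimality of K. *)

Section PointSetDistance.
Variables (R : realType) (X : normedModType R).
Implicit Types (A B : set X) (p q z : X).

Lemma pdist_le_norm A p a : A a -> (pdist p A <= (`|p - a|)%:E)%E.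
Proof. by move=> Aa; apply: ereal_inf_lbound; exists a. Qed.

Lemma pdist_ge0 A p : (0 <= pdist p A)%E.
Proof. by apply: le_ereal_inf_tmp => _ [a _ <-]; rewrite lee_fin. Qed.

Lemma pdist_lt_exists A p x :
  (pdist p A < x%:E)%E -> exists2 a, A a & `|p - a| < x.
Proof. by move/ereal_inf_lt => [_ [a Aa <-]]; rewrite lte_fin; exists a. Qed.

Lemma le_pdist_subset A B p : A `<=` B -> (pdist p B <= pdist p A)%E.
Proof.
by move=> AB; apply: le_ereal_inf_tmp => _ [a Aa <-]; apply/pdist_le_norm/AB.
Qed.

Lemma pdist_le_add A B z u c : (pdist z B <= u%:E)%E ->
  (forall b, B b -> (pdist b A <= c%:E)%E) -> (pdist z A <= (u + c)%:E)%E.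
Proof.
move=> zB BA; apply/lee_addgt0Pr => e e0; have e20 : 0 < e / 2 by lra.
have [b Bb zb] : exists2 b, B b & `|z - b| < u + e / 2.
  by apply: pdist_lt_exists; apply: (le_lt_trans zB); rewrite lte_fin; lra.
have [a Aa ba] : exists2 a, A a & `|b - a| < c + e / 2.
  by apply: pdist_lt_exists; apply: (le_lt_trans (BA b Bb)); rewrite lte_fin; lra.
apply: (le_trans (pdist_le_norm z Aa)); rewrite -EFinD lee_fin.
have := ler_distD b z a; lra.
Qed.

Lemma Bset_meet A B r a :
  A a -> (pdist a B < r%:E)%E -> (Bset r A `&` B) !=set0.
Proof.
move=> Aa /pdist_lt_exists[b Bb ab]; exists b; split => //.
by apply: (le_trans (pdist_le_norm b Aa)); rewrite lee_fin distrC ltW.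
Qed.

Lemma Bset_closed r A : closed (Bset r A).
Proof.
move=> p clp; apply/lee_addgt0Pr => e e0.
have [q [Bq pq]] := clp _ (nbhsx_ballx p _ e0).
rewrite addeC -EFinD; apply: (pdist_le_add (B := [set q])) => [|_ -> //].
apply: (le_trans (pdist_le_norm p (erefl q))).
by move: pq; rewrite -ball_normE /= lee_fin => /ltW.
Qed.

Lemma pdist_convex A x y t u v : convex A -> 0 <= t <= 1 ->
  (pdist x A <= u%:E)%E -> (pdist y A <= v%:E)%E ->
  (pdist (t *: x + (1 - t) *: y)%R A <= (t * u + (1 - t) * v)%:E)%E.
Proof.
move=> cA t01 hx hy; have /andP[t0 t1] := t01; have t1' : 0 <= 1 - t by lra.
apply/lee_addgt0Pr => e e0.
have [a Aa ha] : exists2 a, A a & `|x - a| < u + e.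
  by apply: pdist_lt_exists; apply: (le_lt_trans hx); rewrite lte_fin ltrDl.
have [b Ab hb] : exists2 b, A b & `|y - b| < v + e.
  by apply: pdist_lt_exists; apply: (le_lt_trans hy); rewrite lte_fin ltrDl.
apply: (le_trans (pdist_le_norm _ (cA _ _ t Aa Ab t01))); rewrite -EFinD lee_fin.
have -> : t *: x + (1 - t) *: y - (t *: a + (1 - t) *: b) =
          t *: (x - a) + (1 - t) *: (y - b).
  by rewrite !scalerBr opprD addrACA.
apply: (le_trans (ler_normD _ _)); rewrite !normrZ !ger0_norm //.
have := ler_wpM2l t0 (ltW ha); have := ler_wpM2l t1' (ltW hb); lra.
Qed.

Lemma pdist_le_dHl A B a : A a -> (pdist a B <= dH A B)%E.
Proof. by move=> Aa; rewrite le_max ereal_sup_ubound //; exists a. Qed.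

Lemma pdist_le_dHr A B b : B b -> (pdist b A <= dH A B)%E.
Proof. by move=> Bb; rewrite le_max orbC ereal_sup_ubound //; exists b. Qed.

Lemma dH_le A B x : (forall a, A a -> (pdist a B <= x%:E)%E) ->
  (forall b, B b -> (pdist b A <= x%:E)%E) -> (dH A B <= x%:E)%E.
Proof.
by move=> hA hB; rewrite ge_max; apply/andP; split;
  apply: ge_ereal_sup => _ [a Aa <-]; auto.
Qed.

End PointSetDistance.

Lemma uniform_gap (R : realType) n (F : 'I_n.+1 -> set (\bar R))
    (d : 'I_n.+1 -> R) :
  (forall i, (ereal_sup (F i) < (d i)%:E)%E) ->
  exists2 eps, 0 < eps & forall i x, F i x -> (x <= (d i - eps)%:E)%E.
Proof.
move=> supd.
have gap i : exists e, 0 < e /\ (ereal_sup (F i) <= (d i - e)%:E)%E.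
  move: (supd i); case: (ereal_sup (F i)) => [v| |] //= vd.
  - by exists (d i - v); rewrite subKr lexx subr_gt0 -lte_fin.
  - by exists 1; rewrite ltr01 leNye.
have [g hg] := choice gap.
case: (@arg_minP _ _ _ ord0 xpredT (fun i => g i)) => // j _ gmin.
exists (g j) => [|i x Fix]; first exact: (hg j).1.
apply: (le_trans (ereal_sup_ubound Fix)); apply: (le_trans (hg i).2).
by rewrite lee_fin lerB // gmin.
Qed.

Section IntersectionOfBalls.
Variables (R : realType) (X : normedModType R) (n : nat).
Variables (M : 'I_n.+1 -> set X) (d : 'I_n.+1 -> R).

Lemma Kd_closed : closed (Kd M d).
Proof.
move=> p clp i; have := @Bset_closed _ _ (d i) (M i) p; apply.
by apply: (closureS _ clp) => q; apply.
Qed.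

Lemma subset_Kd K : (forall i, (dH K (M i) <= (d i)%:E)%E) -> K `<=` Kd M d.
Proof. by move=> KM k Kk i; apply: le_trans (pdist_le_dHl _ Kk) (KM i). Qed.

Hypothesis Mconvex : forall i, convex (M i).

Lemma convex_comb_Bset_Kd s r t p z : 0 <= t <= 1 ->
  (Bset r (M s) `&` Kd M d) p -> Kd M d z ->
  (Bset (t * r + (1 - t) * d s) (M s) `&` Kd M d) (t *: p + (1 - t) *: z).
Proof.
move=> t01 [Bp Kp] Kz; split.
  exact: pdist_convex (@Mconvex s) t01 Bp (Kz s).
move=> i; have := pdist_convex (@Mconvex i) t01 (Kp i) (Kz i).
by rewrite /Bset /= -mulrDl subrKC mul1r.
Qed.

Lemma Kd_shrink s a c D : 0 < a -> 0 < c ->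
  (forall z, Kd M d z -> (pdist z (Bset (d s - a) (M s) `&` Kd M d) <= D%:E)%E) ->
  exists del, 0 < del <= a /\ forall z, Kd M d z ->
    (pdist z (Bset (d s - del) (M s) `&` Kd M d) <= c%:E)%E.
Proof.
move=> a0 c0 near; pose t := c / (`|D| + 1 + c).
have t0 : 0 < t by rewrite divr_gt0 //; have := normr_ge0 D; lra.
have tD : t * (`|D| + 1 + c) = c.
  by rewrite divfK // gt_eqF //; have := normr_ge0 D; lra.
have t1 : t <= 1 by have := normr_ge0 D; nra.
exists (t * a); split => [|z Kz]; first by rewrite mulr_gt0 //=; nra.
have [p K0p zp] : exists2 p,
    (Bset (d s - a) (M s) `&` Kd M d) p & `|z - p| < `|D| + 1.
  apply: pdist_lt_exists; apply: (le_lt_trans (near z Kz)).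
  by rewrite lte_fin; have := ler_norm D; lra.
have t01 : 0 <= t <= 1 by rewrite ltW.
have := convex_comb_Bset_Kd t01 K0p Kz.
have -> : t * (d s - a) + (1 - t) * d s = d s - t * a by ring.
move=> /(pdist_le_norm z) zw; apply: (le_trans zw).
have -> : z - (t *: p + (1 - t) *: z) = t *: (z - p).
  by rewrite scalerBl scale1r scalerBr opprD opprB addrCA [z + _]addrC subrK addrC.
rewrite lee_fin normrZ ger0_norm ?ltW //; have := normr_ge0 D; nra.
Qed.

Lemma dH_shrunk_Kd s eps D : 0 < eps ->
  (forall i y, M i y -> (pdist y (Kd M d) <= (d i - eps)%:E)%E) ->
  (forall z, Kd M d z ->
     (pdist z (Bset (d s - eps / 2) (M s) `&` Kd M d) <= D%:E)%E) ->
  exists2 del, 0 < del <= eps / 2 &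
    let K' := Bset (d s - del) (M s) `&` Kd M d in
    (dH K' (M s) <= (d s - del)%:E)%E /\ forall i, (dH K' (M i) <= (d i)%:E)%E.
Proof.
move=> eps0 gap near; have eps20 : 0 < eps / 2 by lra.
have [del [/andP[del0 del_eps] K'near]] := Kd_shrink eps20 eps20 near.
exists del; first by rewrite del0.
have K'M i y : M i y ->
    (pdist y (Bset (d s - del) (M s) `&` Kd M d) <= (d i - eps / 2)%:E)%E.
  move=> My; have -> : d i - eps / 2 = d i - eps + eps / 2 by field.
  exact: pdist_le_add (gap i y My) K'near.
split => [|i]; apply: dH_le => [x [Bx Kx]|y My] //.
- by apply: le_trans (K'M s y My) _; rewrite lee_fin; lra.
- exact: Kx i.
- by apply: le_trans (K'M i y My) _; rewrite lee_fin; lra.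
Qed.

End IntersectionOfBalls.

Lemma Sigma_no_improvement (R : realType) (X : normedModType R) n
    (M : 'I_n.+1 -> set X) (d : 'I_n.+1 -> R) K K' s del :
  Sigma M K -> (forall i, dH K (M i) = (d i)%:E) -> PfCl (M ord0) K' ->
  0 < del -> (dH K' (M s) <= (d s - del)%:E)%E ->
  (forall i, (dH K' (M i) <= (d i)%:E)%E) -> False.
Proof.
move=> [_ Kmin] dK K'Pf del0 K's K'M.
have := Kmin K' K'Pf; rewrite /SM (bigD1 s) //= [X in (_ <= X)%E](bigD1 s) //=.
have K'rest : (\sum_(i < n.+1 | i != s) dH K' (M i) <=
               \sum_(i < n.+1 | i != s) (d i)%:E)%E by apply: lee_sum => i _.
move=> /(le_trans)/(_ (leeD K's K'rest)).
under eq_bigr do rewrite dK.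
by rewrite dK sumEFin -!EFinD lee_fin; lra.
Qed.

Theorem mainTheorem14 (R : realType) (X : normedModType R) (n : nat)
  (M : 'I_n.+1 -> set X)
  (hne : forall i, M i !=set0)
  (hcl : forall i, closed (M i))
  (hcv : forall i, convex (M i))
  (hfin : forall i j, (dH (M i) (M j) < +oo)%E)
  (hSigma : exists K, Sigma M K)
  (d : 'I_n.+1 -> R) (hd : Omega M d)
  (hs : exists s : 'I_n.+1, forall r : R, 0 <= r ->
          (Bset r (M s) `&` Kd M d) !=set0 ->
          (dH (Bset r (M s) `&` Kd M d) (M ord0) < +oo)%E) :
  exists i : 'I_n.+1,
    (d i)%:E = ereal_sup [set pdist x (Kd M d) | x in M i].
Proof.
have [K [KSigma dK]] := hd.
have dist_Kd i y : M i y -> (pdist y (Kd M d) <= (d i)%:E)%E.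
  move=> My; rewrite -dK; apply: le_trans (pdist_le_dHr _ My).
  by apply/le_pdist_subset/subset_Kd => j; rewrite dK.
apply: contrapT => no_attain.
have [eps eps0 gap] : exists2 eps, 0 < eps &
    forall i y, M i y -> (pdist y (Kd M d) <= (d i - eps)%:E)%E.
  pose F i := [set pdist x (Kd M d) | x in M i].
  have [i|eps eps0 gap] := uniform_gap (F := F) (d := d).
    rewrite lt_neqAle ge_ereal_sup ?andbT => [|_ [y My <-]]; last exact: dist_Kd.
    by apply/eqP => attain; apply: no_attain; exists i.
  by exists eps => // i y My; apply: gap; exists y.
have [s Bfin] := hs; have [y0 My0] := hne s.
have gap_s := gap s y0 My0.
pose K0 := Bset (d s - eps / 2) (M s) `&` Kd M d.
have K0ne : K0 !=set0.
  by apply: (Bset_meet My0); apply: le_lt_trans gap_s _; rewrite lte_fin; lra.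
have [C K0C] : exists C, (dH K0 (M ord0) <= C%:E)%E.
  have : 0 <= d s - eps / 2.
    by have := le_trans (pdist_ge0 _ _) gap_s; rewrite lee_fin; lra.
  move=> /Bfin /(_ K0ne); case: dH => [c| |] // _; first by exists c.
  by exists 0; rewrite leNye.
have K0near z : Kd M d z -> (pdist z K0 <= (d ord0 + C)%:E)%E.
  move=> Kz; apply: pdist_le_add (Kz ord0) _ => b Mb.
  exact: le_trans (pdist_le_dHr _ Mb) K0C.
have [del /andP[del0 del_eps] [K's K'M]] := dH_shrunk_Kd hcv eps0 gap K0near.
have K'Pf : PfCl (M ord0) (Bset (d s - del) (M s) `&` Kd M d).
  split; last split.
  - have [z [Bz Kz]] := K0ne; exists z; split => //.
    by apply: le_trans Bz _; rewrite lee_fin; lra.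
  - exact: closedI (@Bset_closed _ _ _ _) (@Kd_closed _ _ _ _ _).
  - exact: le_lt_trans (K'M ord0) (ltey _).
exact: Sigma_no_improvement KSigma dK K'Pf del0 K's K'M.
Qed.
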